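(* Let $\lambda\supseteq\mu$ be partitions, $T$ a cover-expansive Dyck tiling of $\lambda\setminus\mu$, and $\mathfrak a$ a node such that $\mathfrak a$ and $\mathtt N(\mathfrak a)$ both lie in $\lambda\setminus\mu$. Then $\operatorname{dp}(\mathtt N(\mathfrak a))<\operatorname{dp}(\mathfrak a)$.
   Context: Partitions are identified with Young diagrams $\{(a,b)\in\mathbb N^2:b\le\lambda_a\}$; nodes are elements of $\mathbb N^2$; $(a,b)$ has height $\operatorname{ht}(a,b)=a+b$ and lies in column $b-a$ (smaller column = further left). $\mathtt{NE}(\mathfrak n)=\mathfrak n+(0,1)$, $\mathtt{SW}(\mathfrak n)=\mathfrak n-(0,1)$, $\mathtt{SE}(\mathfrak n)=\mathfrak n-(1,0)$, $\mathtt N(\mathfrak n)=\mathfrak n+(1,1)$. A tile is a finite nonempty set $t$ of nodes orderable $\mathfrak n_1,\dots,\mathfrak n_r$ with $\mathfrak n_{i+1}\in\{\mathtt{NE}(\mathfrak n_i),\mathtt{SE}(\mathfrak n_i)\}$; start = leftmost node, end = rightmost node; $\operatorname{ht}(t)$ is the maximum height of its nodes; Dyck tile if start and end have height $\operatorname{ht}(t)$. The depth of $\mathfrak n\in t$ is $\operatorname{dp}(\mathfrak n)=\operatorname{ht}(t)-\operatorname{ht}(\mathfrak n)$. A Dyck tiling of $\lambda\setminus\mu$ is a partition of it into Dyck tiles. It is cover-expansive if (left) whenever $\mathfrak a,\mathtt{SE}(\mathfrak a)\in\lambda\setminus\mu$, the tile of $\mathtt{SE}(\mathfrak a)$ starts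 weakly left of the start of the tile of $\mathfrak a$, and (right) whenever $\mathfrak a,\mathtt{SW}(\mathfrak a)\in\lambda\setminus\mu$, the tile of $\mathtt{SW}(\mathfrak a)$ ends weakly right of the end of the tile of $\mathfrak a$. *)

(* Nodes are 0-indexed: node (a,b) with a,b : nat stands for
   the paper's node (a+1,b+1); heights shift by a constant 2 and columns are
   unchanged, so depths and column comparisons are unaffected. *)
From mathcomp Require Import all_boot all_order all_algebra.
Set Implicit Arguments. Unset Strict Implicit. Unset Printing Implicit Defensive.
Import Order.TTheory GRing.Theory Num.Theory.

Definition node := (nat * nat)%type.

Definition ht (n : node) : nat := n.1 + n.2.
Definition col (n : node) : int := (n.2%:Z - n.1%:Z)%R.

Definition Nnode (n : node) : node := (n.1.+1, n.2.+1).

Definition is_partition (l : seq nat) : bool :=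
  sorted geq l && all (fun x => 0 < x) l.

Definition in_diagram (l : seq nat) (n : node) : bool := n.2 < nth 0 l n.1.

Definition contains (l m : seq nat) : Prop :=
  forall n, in_diagram m n -> in_diagram l n.

Definition in_skew (l m : seq nat) (n : node) : bool :=
  in_diagram l n && ~~ in_diagram m n.

(* y = NE(x) or y = SE(x) *)
Definition tile_step (x y : node) : bool :=
  (y == (x.1, x.2.+1)) || (x == (y.1.+1, y.2)).

(* A tile is represented by its (unique) ordering n_1, ..., n_r with
   n_{i+1} in {NE(n_i), SE(n_i)}; columns strictly increase along it, so
   the first element is the leftmost node and the last the rightmost. *)
Definition is_tile (t : seq node) : bool :=
  if t is x :: s then path tile_step x s else false.

Definition tile_ht (t : seq node) : nat := \max_(n <- t) ht n.
Definition tstart (t : seq node) : node := head (0, 0) t.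
Definition tend (t : seq node) : node := last (0, 0) t.

Definition is_Dyck_tile (t : seq node) : bool :=
  [&& is_tile t, ht (tstart t) == tile_ht t & ht (tend t) == tile_ht t].

Definition dp (t : seq node) (n : node) : nat := tile_ht t - ht n.

Definition is_Dyck_tiling (l m : seq nat) (T : seq (seq node)) : Prop :=
  (forall t, t \in T -> is_Dyck_tile t /\ (forall n, n \in t -> in_skew l m n))
  /\ (forall n, in_skew l m n -> count (fun t => n \in t) T = 1).

Definition cover_expansive (l m : seq nat) (T : seq (seq node)) : Prop :=
  (* (left): b = SE(a) *)
  (forall (a b : node) (ta tb : seq node),
      in_skew l m a -> in_skew l m b -> b.1.+1 = a.1 -> b.2 = a.2 ->
      ta \in T -> a \in ta -> tb \in T -> b \in tb ->
      (col (tstart tb) <= col (tstart ta))%R)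
  /\
  (* (right): b = SW(a) *)
  (forall (a b : node) (ta tb : seq node),
      in_skew l m a -> in_skew l m b -> b.1 = a.1 -> b.2.+1 = a.2 ->
      ta \in T -> a \in ta -> tb \in T -> b \in tb ->
      (col (tend ta) <= col (tend tb))%R).

(* Write a = (x, y), so that N(a) = (x+1, y+1) and c = (x+1, y) is the common
   neighbour with SE(c) = a and SW(N(a)) = c.  By right cover-expansiveness the
   tile of c extends strictly to the right of c, so if c does not lie in the
   tile of N(a) it continues from c either to N(a) (impossible) or to a; in the
   latter case c lies in the tile of a.  Walking leftwards along the tile of
   N(a), each step either reaches its start (and then ht(c) = ht(tile of N(a))
   - 1) or, using left cover-expansiveness, moves to a new pair (a', N(a'))
   with a' still in the tile of a.  Hence ht(tile of N(a)) <= ht(tile of a) + 1,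
   which is the claim since ht(N(a)) = ht(a) + 2. *)
From mathcomp Require Import all_boot all_algebra.
From mathcomp Require Import zify.
Set Implicit Arguments. Unset Strict Implicit. Unset Printing Implicit Defensive.
Import GRing.Theory Num.Theory.

Lemma col_tile_step (x y : node) : tile_step x y -> col y = (col x + 1)%R.
Proof.
case: x y => [x1 x2] [y1 y2]; rewrite /tile_step /col /= => /orP [] /eqP [] -> ->; lia.
Qed.

Section Tile.

Variable t : seq node.
Hypothesis t_tile : is_tile t.

Lemma tile_step_nth i : i.+1 < size t -> tile_step (nth (0, 0) t i) (nth (0, 0) t i.+1).
Proof. by case: t t_tile => [|x s] //= /(pathP (0, 0)); apply. Qed.

Lemma col_nth_tile i : i < size t -> col (nth (0, 0) t i) = (col (tstart t) + i%:Z)%R.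
Proof.
elim: i => [|i IH] lt_i_t; first by rewrite addr0; case: t.
rewrite (col_tile_step (tile_step_nth lt_i_t)) IH ?(ltnW lt_i_t) //; lia.
Qed.

Lemma size_tile_gt0 : 0 < size t.
Proof. by case: t t_tile. Qed.

Lemma col_tend : col (tend t) = (col (tstart t) + (size t).-1%:Z)%R.
Proof.
by rewrite /tend -nth_last col_nth_tile // prednK // size_tile_gt0.
Qed.

Lemma mem_tstart : tstart t \in t.
Proof. by case: t t_tile => //= x s _; rewrite inE eqxx. Qed.

Lemma col_mem_tile n : n \in t ->
  (col n = col (tstart t) + (index n t)%:Z)%R /\ index n t <= (size t).-1.
Proof.
move=> n_t; have lt_n_t : index n t < size t by rewrite index_mem.
split; first by rewrite -{1}(nth_index (0, 0) n_t) col_nth_tile.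
by rewrite -ltnS prednK // size_tile_gt0.
Qed.

Lemma col_tstart_le n : n \in t -> (col (tstart t) <= col n)%R.
Proof. by move=> /col_mem_tile [-> _]; lia. Qed.

Lemma col_le_tend n : n \in t -> (col n <= col (tend t))%R.
Proof. by move=> /col_mem_tile [-> le_n_t]; rewrite col_tend; lia. Qed.

Lemma tile_col_inj n1 n2 : n1 \in t -> n2 \in t -> col n1 = col n2 -> n1 = n2.
Proof.
move=> n1_t n2_t; rewrite (col_mem_tile n1_t).1 (col_mem_tile n2_t).1 => eq_col.
have eq_idx : index n1 t = index n2 t by lia.
by rewrite -(nth_index (0, 0) n1_t) -(nth_index (0, 0) n2_t) eq_idx.
Qed.

Lemma tile_succ n : n \in t -> (col n < col (tend t))%R ->
  exists2 s, s \in t & tile_step n s.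
Proof.
move=> n_t; have [col_n le_n_t] := col_mem_tile n_t.
rewrite col_n col_tend => lt_n_end.
have lt_succ : (index n t).+1 < size t by rewrite -(prednK size_tile_gt0); lia.
exists (nth (0, 0) t (index n t).+1); first exact: mem_nth.
by rewrite -{1}(nth_index (0, 0) n_t) tile_step_nth.
Qed.

Lemma tile_pred n : n \in t -> (col (tstart t) < col n)%R ->
  exists2 p, p \in t & tile_step p n.
Proof.
move=> n_t; have [col_n le_n_t] := col_mem_tile n_t.
rewrite col_n => lt_start_n.
have idx_pos : 0 < index n t by lia.
have lt_n : index n t < size t by rewrite index_mem.
exists (nth (0, 0) t (index n t).-1); first by rewrite mem_nth // (leq_ltn_trans (leq_pred _)).
by rewrite -{2}(nth_index (0, 0) n_t) -{2}(prednK idx_pos) tile_step_nth // prednK.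
Qed.

End Tile.

Lemma ht_le_tile_ht t n : n \in t -> ht n <= tile_ht t.
Proof. by move=> n_t; rewrite /tile_ht (leq_bigmax_seq n). Qed.

Lemma count_eq1_eq (A : eqType) (p : pred A) s x y :
  count p s = 1 -> x \in s -> y \in s -> p x -> p y -> x = y.
Proof.
move=> count1 x_s y_s px py.
have: x \in filter p s by rewrite mem_filter px.
have: y \in filter p s by rewrite mem_filter py.
move: count1; rewrite -size_filter; case: (filter p s) => [|z [|]] //= _.
by rewrite !inE => /eqP -> /eqP ->.
Qed.

Lemma nth_partition_leS (m : seq nat) i : sorted geq m -> nth 0 m i.+1 <= nth 0 m i.
Proof.
elim: m i => //= x s IH [|i] /= sorted_xs; last exact/IH/(path_sorted sorted_xs).
by case: s sorted_xs {IH} => //= y s /andP [].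
Qed.

Lemma in_skew_NW l m x y : is_partition m ->
  in_skew l m (x, y) -> in_skew l m (x.+1, y.+1) -> in_skew l m (x.+1, y).
Proof.
move=> /andP [sorted_m _]; rewrite /in_skew /in_diagram /= => /andP [_ a_notm] /andP [N_l _].
have := nth_partition_leS x sorted_m; lia.
Qed.

Section DyckTiling.

Variables (l m : seq nat) (T : seq (seq node)).
Hypothesis T_tiling : is_Dyck_tiling l m T.

Lemma is_tile_mem t : t \in T -> is_tile t.
Proof. by case: T_tiling => T_Dyck _ /T_Dyck [/and3P []]. Qed.

Lemma in_skew_mem_tile t n : t \in T -> n \in t -> in_skew l m n.
Proof. by case: T_tiling => T_Dyck _ /T_Dyck [_]; apply. Qed.

Lemma ht_tstart t : t \in T -> ht (tstart t) = tile_ht t.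
Proof. by case: T_tiling => T_Dyck _ /T_Dyck [/and3P [_ /eqP -> _]]. Qed.

Lemma tile_of_mem_eq t1 t2 n : t1 \in T -> t2 \in T -> n \in t1 -> n \in t2 -> t1 = t2.
Proof.
move=> t1_T t2_T n_t1 n_t2; case: T_tiling => _ /(_ n (in_skew_mem_tile t1_T n_t1)) count1.
exact: count_eq1_eq count1 t1_T t2_T n_t1 n_t2.
Qed.

Lemma exists_tile_of n : in_skew l m n -> exists2 t, t \in T & n \in t.
Proof.
case: T_tiling => _ /[apply] count1.
by apply/hasP; rewrite has_count count1.
Qed.

Hypotheses (m_part : is_partition m) (T_ce : cover_expansive l m T).

Variables (ta tN : seq node).
Hypotheses (ta_T : ta \in T) (tN_T : tN \in T).

Lemma NW_mem_tile x y : (x, y) \in ta -> (x.+1, y.+1) \in tN ->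
  (x.+1, y) \notin tN -> (x.+1, y) \in ta.
Proof.
move=> a_ta N_tN c_notin_tN.
have N_skew := in_skew_mem_tile tN_T N_tN.
have c_skew := in_skew_NW m_part (in_skew_mem_tile ta_T a_ta) N_skew.
have [tc tc_T c_tc] := exists_tile_of c_skew.
have tc_right := T_ce.2 _ _ _ _ N_skew c_skew erefl erefl tN_T N_tN tc_T c_tc.
have lt_c_end : (col (x.+1, y) < col (tend tc))%R.
  have := col_le_tend (is_tile_mem tN_T) N_tN.
  by move: tc_right; rewrite /col /=; lia.
have [[s1 s2] s_tc] := tile_succ (is_tile_mem tc_T) c_tc lt_c_end.
rewrite /tile_step /= => /orP [] /eqP [? ?]; subst s1 s2.
- by rewrite (tile_of_mem_eq tc_T tN_T s_tc N_tN) in c_tc; rewrite c_tc in c_notin_tN.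
- by rewrite (tile_of_mem_eq ta_T tc_T a_ta s_tc).
Qed.

Lemma tile_ht_le_start x y : (x, y) \in ta -> (x.+1, y.+1) \in tN ->
  (col (x.+1, y.+1) <= col (tstart tN))%R -> tile_ht tN <= (tile_ht ta).+1.
Proof.
move=> a_ta N_tN le_N_start; have tN_tile := is_tile_mem tN_T.
have N_start : tstart tN = (x.+1, y.+1).
  apply: (tile_col_inj tN_tile (mem_tstart tN_tile) N_tN).
  by have := col_tstart_le tN_tile N_tN; lia.
have c_notin_tN : (x.+1, y) \notin tN.
  apply/negP => /(col_tstart_le tN_tile); rewrite N_start /col /=; lia.
have := ht_le_tile_ht (NW_mem_tile a_ta N_tN c_notin_tN).
by rewrite -(ht_tstart tN_T) N_start /ht /=; lia.
Qed.

Lemma tile_ht_Nnode_le a : a \in ta -> Nnode a \in tN -> tile_ht tN <= (tile_ht ta).+1.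
Proof.
have [ta_tile tN_tile] := (is_tile_mem ta_T, is_tile_mem tN_T).
suff ind k x y : (col (x.+1, y.+1) - col (tstart tN) <= k%:Z)%R ->
    (x, y) \in ta -> (x.+1, y.+1) \in tN -> tile_ht tN <= (tile_ht ta).+1.
  by case: a => x y; apply: (ind `|col (x.+1, y.+1) - col (tstart tN)|%N); lia.
elim: k x y => [|k IH] x y le_k a_ta N_tN.
  by apply: tile_ht_le_start a_ta N_tN _; lia.
have [le_N_start|lt_start_N] := lerP (col (x.+1, y.+1)) (col (tstart tN)).
  exact: tile_ht_le_start a_ta N_tN le_N_start.
have [[q1 q2] q_tN] := tile_pred tN_tile N_tN lt_start_N.
rewrite /tile_step /= => /orP [] /eqP [? ?]; subst q1 q2.
- (* c precedes N(a) in tN; by left cover-expansiveness a has a predecessor in ta,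
     which is not c (else a, N(a) share a tile and a column), so it is SW(a). *)
  have c_skew := in_skew_mem_tile tN_T q_tN.
  have := T_ce.1 _ _ _ _ c_skew (in_skew_mem_tile ta_T a_ta) erefl erefl tN_T q_tN ta_T a_ta.
  have := col_tstart_le tN_tile q_tN; rewrite /col /= => ? ?.
  have lt_start_a : (col (tstart ta) < col (x, y))%R by rewrite /col /=; lia.
  have [[p1 p2] p_ta] := tile_pred ta_tile a_ta lt_start_a.
  rewrite /tile_step /= => /orP [] /eqP [? ?]; subst p1.
  + by subst y; apply: (IH x p2) => //; move: le_k; rewrite /col /=; lia.
  + subst p2; rewrite (tile_of_mem_eq tN_T ta_T q_tN p_ta) in N_tN.
    have := tile_col_inj ta_tile a_ta N_tN; rewrite /col /= => eq_a_N.
    by case: (eq_a_N ltac:(lia)); lia.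
- (* N(c) precedes N(a) in tN, so c (same column) is not in tN; recurse on c. *)
  have c_notin_tN : (x.+1, y) \notin tN.
    apply/negP => c_tN; have := tile_col_inj tN_tile c_tN q_tN; rewrite /col /= => eq_c_q.
    by case: (eq_c_q ltac:(lia)); lia.
  apply: (IH x.+1 y) (NW_mem_tile a_ta N_tN c_notin_tN) q_tN.
  by move: le_k; rewrite /col /=; lia.
Qed.

End DyckTiling.

Theorem lemma4p4 (l m : seq nat) (T : seq (seq node)) (a : node) :
  is_partition l -> is_partition m -> contains l m ->
  is_Dyck_tiling l m T -> cover_expansive l m T ->
  in_skew l m a -> in_skew l m (Nnode a) ->
  forall ta tN : seq node, ta \in T -> a \in ta -> tN \in T -> Nnode a \in tN ->
  dp tN (Nnode a) < dp ta a.
Proof.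
move=> _ m_part _ T_tiling T_ce _ _ ta tN ta_T a_ta tN_T N_tN.
have := tile_ht_Nnode_le T_tiling m_part T_ce ta_T tN_T a_ta N_tN.
have := ht_le_tile_ht a_ta; have := ht_le_tile_ht N_tN.
by rewrite /dp /Nnode /ht /=; lia.
Qed.
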